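(* Let $S_1\subseteq S$ with $|S_1|>1$. Let $\beta\in(0,1/2^{|S|})$, $a>0$, and $\varepsilon\in\left(0,\frac12\left(\frac{a}{L}\right)^{|S|}\frac{\beta(1-\beta)}{L\,|S|^4}\right)$. Let $q$ be an irreducible transition matrix on $S$ such that $\mathbf P_{s,q}\big(T^+_{\overline{S_1}\cup\{t\}}=T^+_{\{t\}}\big)\ge a$ for all $s,t\in S_1$. Let $\widehat q$ be a transition matrix on $S$ that is $(\varepsilon,\beta)$-close to $q$ on $S_1$ and satisfies $\widehat q(t\mid s)=q(t\mid s)$ for all $s\in S\setminus S_1$, $t\in S$. Then: (1) all states of $S_1$ belong to the same recurrent class $R$ of $\widehat q$; (2) the stationary distribution $\widehat\mu$ of $\widehat q$ on $R$ satisfies $\left|1-\frac{\widehat\mu(s\mid S_1)}{\mu(s\mid S_1)}\right|\le 18\beta L$ for every $s\in S_1$, where $\mu(s\mid S_1)=\mu_s/\mu_{S_1}$ and $\widehat\mu(s\mid S_1)=\widehat\mu_s/\widehat\mu_{S_1}$.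
   Context: $S$ is a finite set with $|S|\ge 2$. A transition matrix on $S$ is $q=(q(t\mid s))_{s,t\in S}$ with nonnegative entries and rows summing to $1$; $q(D\mid s)=\sum_{t\in D}q(t\mid s)$, $\overline C=S\setminus C$. For irreducible $q$, $\mu$ is its stationary distribution and $\mu_C=\sum_{s\in C}\mu_s$. $(\mathbf s_n)_{n\ge0}$ is a Markov chain with transition matrix $q$, $\mathbf P_{s,q}$ its law when $\mathbf s_0=s$; for $C\subsetneq S$, $T^+_C=\min\{n\ge1:\mathbf s_n\in C\}$ (with $\min\emptyset=+\infty$). Define $\zeta^1_q=\min_{\emptyset\neq C\subsetneq S_1}\sum_{s\in C}\mu_s q(\overline C\mid s)$. Given $\varepsilon,\beta>0$, $\widehat q$ is $(\varepsilon,\beta)$-close to $q$ on $S_1$ if for all $s,t\in S$, $\left|1-\frac{\widehat q(t\mid s)}{q(t\mid s)}\right|\le\beta$ whenever (a) $\mu_s q(t\mid s)\ge\varepsilon\zeta^1_q$ or (b) $\mu_s\widehat q(t\mid s)\ge\varepsilon\zeta^1_q$ (in case (b) this requires in particular $q(t\mid s)>0$). $L=\sum_{n=1}^{|S|-1}\binom{|S|}{n}n^{|S|}$. The stationary distribution of $\widehat q$ on $R$ is viewed as a distribution on $S$ vanishing outside $R$. *)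

From HB Require Import structures.
From mathcomp Require Import all_boot all_order all_algebra.
From mathcomp Require Import all_classical all_reals topology normedtype sequences.
Set Implicit Arguments. Unset Strict Implicit. Unset Printing Implicit Defensive.
Import Order.TTheory GRing.Theory Num.Theory numFieldNormedType.Exports.
Local Open Scope ring_scope.

Section MarkovDefs.
Variables (R : realType) (S : finType).

(* A transition matrix is a function q : S -> S -> R with
   q s t = q(t | s) (probability to go from s to t). *)
Definition transition_matrix (q : S -> S -> R) : Prop :=
  (forall s t, 0 <= q s t) /\ (forall s, \sum_(t : S) q s t = 1).

Definition qrel (q : S -> S -> R) : rel S := fun s t => 0 < q s t.

Definition mc_irreducible (q : S -> S -> R) : Prop :=
  forall s t : S, connect (qrel q) s t.

Definition mc_stationary (q : S -> S -> R) (mu : S -> R) : Prop :=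
  (forall s, 0 <= mu s) /\ \sum_(s : S) mu s = 1 /\
  (forall t, \sum_(s : S) mu s * q s t = mu t).

(* R0 is a recurrent class of q: a nonempty closed communicating class,
   i.e. for every x in R0, the set of states reachable from x is exactly R0. *)
Definition recurrent_class (q : S -> S -> R) (R0 : {set S}) : Prop :=
  (0 < #|R0|)%N /\ forall x, x \in R0 -> forall y, connect (qrel q) x y = (y \in R0).

(* first_hit q A n x u = P_{x,q}( T^+_A = n+1 and s_{n+1} = u ), for u in A
   (and 0 for u not in A) *)
Fixpoint first_hit (q : S -> S -> R) (A : {set S}) (n : nat) (x u : S) : R :=
  match n with
  | 0 => if u \in A then q x u else 0
  | n'.+1 => \sum_(y : S | y \notin A) q x y * first_hit q A n' y u
  end.

(* P_{s,q}( T^+_A = T^+_{t} ) for t in A.  The complementary event is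
   { T^+_A < oo and s_{T^+_A} <> t }, whose probability is the limit
   (series of nonnegative terms bounded by 1) below. *)
Definition prob_hit_eq (q : S -> S -> R) (A : {set S}) (t s : S) : R :=
  1 - limn (fun N : nat => \sum_(0 <= n < N) \sum_(u in A | u != t) first_hit q A n s u).

(* All the minimized quantities are <= 1 (for a probability mu and stochastic q),
   so the neutral element 1 does not affect the minimum (the index set is
   nonempty when #|S1| > 1). *)
Definition zeta1 (q : S -> S -> R) (mu : S -> R) (S1 : {set S}) : R :=
  \big[Num.min/1]_(C : {set S} | (0 < #|C|)%N && (C \proper S1))
     (\sum_(s in C) mu s * (\sum_(t in ~: C) q s t)).

Definition mc_close (eps beta : R) (q qh : S -> S -> R) (mu : S -> R) (S1 : {set S})
  : Prop :=
  forall s t : S,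
    (eps * zeta1 q mu S1 <= mu s * q s t ->
       `|1 - qh s t / q s t| <= beta) /\
    (eps * zeta1 q mu S1 <= mu s * qh s t ->
       0 < q s t /\ `|1 - qh s t / q s t| <= beta).

Definition Lconst : nat :=
  \sum_(1 <= n < #|S|) 'C(#|S|, n) * n ^ #|S|.

End MarkovDefs.

From HB Require Import structures.
From mathcomp Require Import all_boot all_order all_algebra.
From mathcomp Require Import all_classical all_reals topology normedtype sequences.
From mathcomp Require Import ring lra zify.

Set Implicit Arguments. Unset Strict Implicit. Unset Printing Implicit Defensive.
Import Order.TTheory GRing.Theory Num.Theory numFieldNormedType.Exports.
Local Open Scope ring_scope.

(* Let [h_t y = P_y(T^+_A = T^+_t)] with [A = ~: S1 :|: [set t]]. Pairing the
   harmonic equation of [h_t] with the stationary flow of [q] shows that whenever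
   [C \subset S1] misses some [t \in S1], the [q]-flow from [C] into [S1 :\: C] is
   at least [a * zeta1] ([zeta1] is a lower bound of the flow out of [C]). Flows of
   that size are changed by [qh] by a relative error at most [delta = beta + beta / 4],
   since the error [eps * zeta1] on each of the [#|S|^2] entries is negligible
   against [a * zeta1]. Hence [qh] connects any two parts of [S1], so [S1] is strongly
   connected for [qh]; as [qh = q] off [S1], every state reaches [S1], whose class is
   thus the unique recurrent class.
   For a [qh]-stationary [muh] let [r = muh / mu] and [D = [set x | rho * lam < r x]],
   with [rho = 1 + 3 * delta]. If [D] splits [S1] but no state has
   [lam < r x <= rho * lam], then, [F] being the [mu]-flow of [q] out of [D], the
   [muh]-flow of [qh] out of [D] is at least [rho * lam * (1 - delta) * F] while the
   one into [D] is at most [lam * (1 + delta) * F], contradicting stationarity. So if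
   [r s > rho ^+ #|S| * r s'] for [s, s'] in [S1], each of the [#|S|] level intervals
   between [r s'] and [r s] would contain a state other than [s'], which is
   impossible; finally [rho ^+ #|S| - 1 <= 18 * beta * L]. *)

Section Flows.
Variables (R : realType) (S : finType).

Definition flow (p : S -> S -> R) (m : S -> R) (A B : {set S}) : R :=
  \sum_(x in A) \sum_(y in B) m x * p x y.

Lemma sumr_setC (F : S -> R) (D : {set S}) :
  \sum_x F x = \sum_(x in D) F x + \sum_(x in ~: D) F x.
Proof.
rewrite (bigID (mem D)) /=; congr (_ + _).
by apply: eq_bigl => x; rewrite finset.in_setC.
Qed.

Lemma ler_sum_term (P : pred S) (F : S -> R) j :
  (forall i, P i -> 0 <= F i) -> P j -> F j <= \sum_(i | P i) F i.
Proof.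
move=> F_ge0 Pj; rewrite (bigD1 j) //= lerDl.
by apply: sumr_ge0 => i /andP[Pi _]; apply: F_ge0.
Qed.

Lemma ler_sum_subset (A B : {set S}) (F : S -> R) :
  A \subset B -> (forall x, 0 <= F x) -> \sum_(x in A) F x <= \sum_(x in B) F x.
Proof.
move=> AB F_ge0; rewrite [leLHS]big_mkcond [leRHS]big_mkcond /=.
apply: ler_sum => x _; case: ifP => [/(fintype.subsetP AB)->//|_].
by case: ifP.
Qed.

Lemma sumr_eq1_exists_gt0 (m : S -> R) : \sum_s m s = 1 -> exists x, 0 < m x.
Proof.
move=> m_sum1; case: (boolP [exists x, 0 < m x]) => [/existsP//|].
rewrite negb_exists => /forallP m_le0.
have : \sum_s m s <= 0 by apply: sumr_le0 => i _; rewrite leNgt m_le0.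
by rewrite m_sum1 ler10.
Qed.

Lemma connect_exit (e : rel S) (C : {set S}) x y :
  connect e x y -> x \in C -> y \notin C ->
  exists u v, [/\ u \in C, v \notin C & e u v].
Proof.
move=> /connectP[pth]; elim: pth x => [|z pth IH] x /=; first by move=> _ -> ->.
move=> /andP[xz pz] ey xC yC.
by case: (boolP (z \in C)) => [zC|zC]; [apply: (IH z) | exists x, z].
Qed.

Section FlowTheory.
Variable p : S -> S -> R.
Hypothesis p_ge0 : forall s t, 0 <= p s t.

Lemma flow_subset (m : S -> R) (A A' B B' : {set S}) :
  (forall x, 0 <= m x) -> A \subset A' -> B \subset B' ->
  flow p m A B <= flow p m A' B'.
Proof.
move=> m_ge0 AA' BB'; apply: (@le_trans _ _ (flow p m A B')).
  by apply: ler_sum => x _; apply: ler_sum_subset => // y; apply: mulr_ge0.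
apply: ler_sum_subset => // x.
by apply: sumr_ge0 => y _; apply: mulr_ge0.
Qed.

Lemma ler_flow_scale (m m' : S -> R) c (A B : {set S}) :
  (forall x, x \in A -> c * m x <= m' x) -> c * flow p m A B <= flow p m' A B.
Proof.
move=> mm'; rewrite mulr_sumr; apply: ler_sum => x xA.
rewrite mulr_sumr; apply: ler_sum => y _.
by rewrite mulrA ler_wpM2r // mm'.
Qed.

Lemma flow_ler_scale (m m' : S -> R) c (A B : {set S}) :
  (forall x, x \in A -> m' x <= c * m x) -> flow p m' A B <= c * flow p m A B.
Proof.
move=> mm'; rewrite mulr_sumr; apply: ler_sum => x xA.
rewrite mulr_sumr; apply: ler_sum => y _.
by rewrite mulrA ler_wpM2r // mm'.
Qed.

Variable m : S -> R.
Hypothesis p_sum1 : forall s, \sum_t p s t = 1.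
Hypothesis m_stationary : forall t, \sum_s m s * p s t = m t.

Lemma flow_balance (D : {set S}) : flow p m (~: D) D = flow p m D (~: D).
Proof.
have inflow : \sum_(y in D) m y = flow p m D D + flow p m (~: D) D.
  rewrite /flow exchange_big [X in _ + X]exchange_big -big_split /=.
  by apply: eq_bigr => y _; rewrite -sumr_setC m_stationary.
have outflow : \sum_(x in D) m x = flow p m D D + flow p m D (~: D).
  rewrite /flow -big_split /=; apply: eq_bigr => x _.
  by rewrite -!mulr_sumr -mulrDr -sumr_setC p_sum1 mulr1.
by apply: (addrI (flow p m D D)); rewrite -inflow -outflow.
Qed.

Lemma stationary_sum_defect (f : S -> R) (C : {set S}) :
  \sum_(x in C) m x * (f x - \sum_(y in C) p x y * f y) =
  \sum_(y in C) f y * \sum_(x in ~: C) m x * p x y.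
Proof.
have inflow y : \sum_(x in ~: C) m x * p x y = m y - \sum_(x in C) m x * p x y.
  by rewrite -(m_stationary y) (sumr_setC _ C) addrAC subrr add0r.
under [RHS]eq_bigr => y _ do rewrite inflow mulrBr.
rewrite sumrB; under eq_bigr => x _ do rewrite mulrBr.
rewrite sumrB; congr (_ - _); first by apply: eq_bigr => x _; rewrite mulrC.
under eq_bigr do rewrite mulr_sumr.
under [RHS]eq_bigr do rewrite mulr_sumr.
rewrite [RHS]exchange_big; apply: eq_bigr => x _; apply: eq_bigr => y _.
by rewrite mulrA mulrC.
Qed.

Lemma stationary_connect_gt0 x y : (forall s, 0 <= m s) ->
  0 < m x -> connect (qrel p) x y -> 0 < m y.
Proof.
move=> m_ge0 mx /connectP[pth]; elim: pth x mx => [|z pth IH] x mx /=.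
  by move=> _ ->.
move=> /andP[xz pz] ey; apply: (IH z) => //.
rewrite -m_stationary; apply: lt_le_trans (@ler_sum_term predT _ x _ _) => //.
  exact: mulr_gt0.
by move=> i _; apply: mulr_ge0.
Qed.

End FlowTheory.
End Flows.

Section FirstHitting.
Local Open Scope classical_set_scope.
Variables (R : realType) (S : finType) (p : S -> S -> R) (A : {set S}) (t : S).
Hypothesis p_ge0 : forall s u, 0 <= p s u.
Hypothesis p_sum1 : forall s, \sum_u p s u = 1.

Lemma first_hit_ge0 n x u : 0 <= first_hit p A n x u.
Proof.
elim: n x => [|n IH] x /=; first by case: ifP.
by apply: sumr_ge0 => y _; apply: mulr_ge0.
Qed.

Definition escape_partial N x :=
  \sum_(0 <= n < N) \sum_(u in A | u != t) first_hit p A n x u.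

Lemma escape_partialS N x : escape_partial N.+1 x =
  \sum_(u in A | u != t) p x u + \sum_(y | y \notin A) p x y * escape_partial N y.
Proof.
rewrite /escape_partial big_nat_recl //=; congr (_ + _).
  by apply: eq_bigr => u /andP[-> _].
rewrite exchange_big /=.
under eq_bigr => u _ do rewrite exchange_big /=.
rewrite exchange_big /=; apply: eq_bigr => y _.
rewrite mulr_sumr exchange_big /=; apply: eq_bigr => n _.
by rewrite mulr_sumr.
Qed.

Lemma escape_partial_ge0 N x : 0 <= escape_partial N x.
Proof. by apply: sumr_ge0 => n _; apply: sumr_ge0 => u _; apply: first_hit_ge0. Qed.

Lemma escape_partial_le1 N x : escape_partial N x <= 1.
Proof.
elim: N x => [|N IH] x; first by rewrite /escape_partial big_geq.
rewrite escape_partialS -(p_sum1 x) [leRHS](bigID (mem A)) /=.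
apply: lerD.
  by rewrite [leRHS](bigID (fun y => y != t)) /= lerDl; apply: sumr_ge0.
by apply: ler_sum => y _; rewrite -[leRHS]mulr1; apply: ler_wpM2l.
Qed.

Lemma escape_partial_nondecreasing x : nondecreasing_seq (escape_partial ^~ x).
Proof.
apply/nondecreasing_seqP => N; rewrite /escape_partial big_nat_recr //= lerDl.
by apply: sumr_ge0 => u _; apply: first_hit_ge0.
Qed.

Lemma escape_partial_cvg x : cvgn (escape_partial ^~ x).
Proof.
apply: nondecreasing_is_cvgn; first exact: escape_partial_nondecreasing.
by exists 1 => _ [N _ <-]; apply: escape_partial_le1.
Qed.

Lemma prob_hit_eqE x : prob_hit_eq p A t x = 1 - limn (escape_partial ^~ x).
Proof. by []. Qed.

Lemma prob_hit_eq_le1 x : prob_hit_eq p A t x <= 1.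
Proof.
rewrite prob_hit_eqE lerBlDr lerDl; apply: le_trans (escape_partial_ge0 0 x) _.
exact: nondecreasing_cvgn_le (@escape_partial_nondecreasing x) (@escape_partial_cvg x) 0.
Qed.

Lemma limn_escape_partial x : limn (escape_partial ^~ x) =
  \sum_(u in A | u != t) p x u + \sum_(y | y \notin A) p x y * limn (escape_partial ^~ y).
Proof.
have shifted : (fun N => escape_partial N.+1 x) @ \oo --> limn (escape_partial ^~ x).
  by rewrite (cvg_shiftS (escape_partial ^~ x)); exact: (@escape_partial_cvg x).
have shifted_lim : (fun N => escape_partial N.+1 x) @ \oo -->
    \sum_(u in A | u != t) p x u + \sum_(y | y \notin A) p x y * limn (escape_partial ^~ y).
  under eq_fun do rewrite escape_partialS.
  apply: cvgD; first exact: cvg_cst.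
  apply: (cvg_big add_continuous) => y _.
  by apply: cvgMl_tmp; exact: (@escape_partial_cvg y).
exact: cvg_unique _ shifted shifted_lim.
Qed.

Lemma prob_hit_eq_harmonic x : t \in A ->
  prob_hit_eq p A t x =
  \sum_y p x y * (if y == t then 1 else if y \in A then 0 else prob_hit_eq p A t y).
Proof.
move=> tA; set G := fun y => limn (escape_partial ^~ y).
rewrite prob_hit_eqE limn_escape_partial -/G [RHS](bigID (mem A)) /=.
have -> : \sum_(y in A) p x y * (if y == t then 1 else if y \in A then 0 else 1 - G y)
    = p x t.
  rewrite (bigD1 t) //= eqxx mulr1 big1 ?addr0 // => y /andP[yA ynt].
  by rewrite (negbTE ynt) yA mulr0.
have -> : \sum_(y | y \notin A) p x y *
      (if y == t then 1 else if y \in A then 0 else 1 - G y)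
    = \sum_(y | y \notin A) p x y - \sum_(y | y \notin A) p x y * G y.
  rewrite -sumrB; apply: eq_bigr => y yA.
  have -> : (y == t) = false by apply: contraNF yA => /eqP->.
  by rewrite (negbTE yA) mulrBr mulr1.
have := p_sum1 x; rewrite (bigID (mem A)) (bigD1 t) //= => <-.
lra.
Qed.

End FirstHitting.

(* Only the last summand [#|S| * (#|S| - 1) ^ #|S|] of [Lconst S] is needed. *)
Lemma Lconst_ge_exp2 (S : finType) : (2 <= #|S|)%N -> (2 ^ #|S| <= 4 * Lconst S)%N.
Proof.
rewrite /Lconst; case: #|S| => [|[|m]] // _.
rewrite big_nat_recr //= binSn.
apply: (@leq_trans (4 * (m.+2 * m.+1 ^ m.+2))); last by rewrite leq_mul2l leq_addl.
case: m => [//|m]; apply: (@leq_trans (m.+2 ^ m.+3)); first by rewrite leq_exp2r.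
by rewrite -[leqLHS]mul1n; apply: leq_mul => //; rewrite -[leqLHS]mul1n leq_mul.
Qed.

Lemma Lconst_gt0 (S : finType) : (2 <= #|S|)%N -> (0 < Lconst S)%N.
Proof.
move/Lconst_ge_exp2; case: (Lconst S) => //.
by rewrite muln0 leqn0 expn_eq0.
Qed.

Lemma expr1D_le (R : realFieldType) (x : R) k : 0 <= x -> x <= 1 ->
  (1 + x) ^+ k + x <= 1 + x * (2 ^ k)%:R.
Proof.
move=> x_ge0 x_le1; elim: k => [|k IH]; first by rewrite expr0 expn0 mulr1.
rewrite exprS expnS natrM.
have c_ge1 : 1 <= (2 ^ k)%:R :> R by rewrite ler1n expn_gt0.
set c := (2 ^ k)%:R in IH c_ge1 *.
have : (1 + x) * (1 + x) ^+ k <= (1 + x) * (1 + x * c - x) by apply: ler_wpM2l; lra.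
have : 0 <= x * (1 - x) * (c - 1) by apply: mulr_ge0; [apply: mulr_ge0|]; lra.
nra.
Qed.

Lemma lt_exp2V_mul4_lt1 (R : realFieldType) (beta : R) k :
  (2 <= k)%N -> 0 < beta -> beta < ((2 ^ k)%:R)^-1 -> 4 * beta < 1.
Proof.
move=> k_ge2 beta_gt0 beta_lt.
have exp2_ge4 : 4 <= (2 ^ k)%:R :> R.
  by rewrite (_ : 4 = (2 ^ 2)%:R) // ler_nat leq_exp2l.
have : beta * (2 ^ k)%:R < 1 by rewrite -ltr_pdivlMr ?mul1r // ltr0n expn_gt0.
have : 4 * beta <= (2 ^ k)%:R * beta by apply: ler_wpM2r => //; apply: ltW.
lra.
Qed.

Lemma eps_negligible (R : realFieldType) (a beta eps : R) (L k : nat) :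
  (0 < L)%N -> (2 <= k)%N -> 0 < a -> a <= 1 -> 0 < beta -> 4 * beta < 1 ->
  0 < eps -> eps < 2^-1 * (a / L%:R) ^+ k * (beta * (1 - beta)) / (L%:R * (k ^ 4)%:R) ->
  (k * k)%:R * eps <= a * beta / 4.
Proof.
move=> L_gt0 k_ge2 a_gt0 a_le1 beta_gt0 beta4 eps_gt0 eps_lt.
set Lr := L%:R : R; set N := k%:R : R.
have L_ge1 : 1 <= Lr by rewrite ler1n.
have N_ge2 : 2 <= N by rewrite ler_nat.
set X := a / Lr.
have X_ge0 : 0 <= X by apply: divr_ge0; lra.
have X_le1 : X <= 1 by rewrite ler_pdivrMr ?mul1r; lra.
have Xk_le : X ^+ k <= X.
  by case: k k_ge2 {eps_lt N N_ge2} => [|m] // _; rewrite exprS ler_piMr // exprn_ile1.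
have eps_lt' : eps * (Lr * N ^+ 4) < 2^-1 * X * beta.
  rewrite -ltr_pdivlMr; last by apply: mulr_gt0; [lra | apply: exprn_gt0; lra].
  apply: lt_le_trans eps_lt _; rewrite /N -natrX.
  have k4_gt0 : 0 < (k ^ 4)%:R :> R by rewrite ltr0n expn_gt0 (ltn_trans _ k_ge2).
  rewrite ler_pM2r; last by rewrite invr_gt0 mulr_gt0 //; lra.
  rewrite -mulrA -[2^-1 * X * beta]mulrA ler_wpM2l ?invr_ge0 //.
  have var_ge0 : 0 <= beta * (1 - beta) by nra.
  have var_le : beta * (1 - beta) <= beta by nra.
  by apply: le_trans (ler_wpM2r var_ge0 Xk_le) _; apply: ler_wpM2l.
have XL : X * Lr = a by rewrite /X divfK // gt_eqF //; lra.
have N4 : N ^+ 4 = N * N * (N * N) by rewrite !exprS expr0 mulr1 !mulrA.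
rewrite natrM -/N; set u := N * N * eps.
have u_gt0 : 0 < u by apply: mulr_gt0 => //; apply: mulr_gt0; lra.
have LN_ge4 : 4 <= Lr * Lr * (N * N).
  have : 1 <= Lr * Lr by nra.
  have : 4 <= N * N by nra.
  nra.
have : 2 * u * (Lr * Lr * (N * N)) < a * beta.
  have : eps * (Lr * N ^+ 4) * Lr < 2^-1 * X * beta * Lr by rewrite ltr_pM2r //; lra.
  rewrite -XL N4 /u; lra.
nra.
Qed.

Section Perturbation.
Variables (R : realType) (S : finType) (S1 : {set S}) (beta a eps : R)
  (q qh : S -> S -> R) (mu : S -> R).
Hypothesis S1_gt1 : (1 < #|S1|)%N.
Hypothesis beta_gt0 : 0 < beta.
Hypothesis beta_lt : beta < ((2 ^ #|S|)%:R)^-1.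
Hypothesis a_gt0 : 0 < a.
Hypothesis eps_gt0 : 0 < eps.
Hypothesis eps_lt : eps < 2^-1 * (a / (Lconst S)%:R) ^+ #|S| * (beta * (1 - beta))
          / ((Lconst S)%:R * (#|S| ^ 4)%:R).
Hypothesis q_tm : transition_matrix q.
Hypothesis q_irr : mc_irreducible q.
Hypothesis mu_stat : mc_stationary q mu.
Hypothesis hit_ge : forall s t, s \in S1 -> t \in S1 ->
  a <= prob_hit_eq q (~: S1 :|: [set t]) t s.
Hypothesis qh_tm : transition_matrix qh.
Hypothesis qh_close : mc_close eps beta q qh mu S1.
Hypothesis qh_out : forall s t, s \notin S1 -> qh s t = q s t.

Let q_ge0 : forall s t, 0 <= q s t. Proof. by case: q_tm. Qed.
Let q_sum1 : forall s, \sum_t q s t = 1. Proof. by case: q_tm. Qed.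
Let qh_ge0 : forall s t, 0 <= qh s t. Proof. by case: qh_tm. Qed.
Let qh_sum1 : forall s, \sum_t qh s t = 1. Proof. by case: qh_tm. Qed.
Let mu_ge0 : forall s, 0 <= mu s. Proof. by case: mu_stat. Qed.
Let mu_sum1 : \sum_s mu s = 1. Proof. by case: mu_stat => _ []. Qed.
Let mu_balance : forall t, \sum_s mu s * q s t = mu t.
Proof. by case: mu_stat => _ []. Qed.

Local Notation Z := (zeta1 q mu S1).
Local Notation n := #|S|.
Local Notation delta := (beta + beta / 4).
(* Chosen so that [rho * (1 - delta) > 1 + delta], see [ratio_level_gap]. *)
Local Notation rho := (1 + 3 * delta).
(* [lra] and [nra] do not use section hypotheses: proofs below copy the ones they
   need into the local context. *)

Lemma S1_exists : exists s, s \in S1.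
Proof. by apply/card_gt0P; apply: ltnW. Qed.

Lemma card_ge2 : (2 <= n)%N.
Proof. exact: leq_trans S1_gt1 (max_card _). Qed.

Lemma mu_gt0 x : 0 < mu x.
Proof.
have [x0 mu_x0] := sumr_eq1_exists_gt0 mu_sum1.
exact: (stationary_connect_gt0 q_ge0 mu_balance mu_ge0 mu_x0 (q_irr x0 x)).
Qed.

Lemma zeta1_le_flow (C : {set S}) : (0 < #|C|)%N -> C \proper S1 ->
  Z <= flow q mu C (~: C).
Proof.
move=> C0 CS1; rewrite /zeta1 (bigD1 C) /=; last by rewrite C0 CS1.
rewrite ge_min /flow; apply/orP; left.
by under [X in _ <= X]eq_bigr do rewrite -mulr_sumr.
Qed.

Lemma zeta1_gt0 : 0 < Z.
Proof.
rewrite /zeta1; apply: (big_ind (fun z => 0 < z)) => //.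
  by move=> x y x0 y0; rewrite lt_min x0.
move=> C /andP[/card_gt0P[s sC] /properP[_ [t tS1 tC]]].
have [u [v [uC vC uv]]] := connect_exit (q_irr s t) sC tC.
apply: lt_le_trans (@ler_sum_term _ _ (mem C) _ u _ uC).
  apply: lt_le_trans (ler_wpM2l (mu_ge0 u) (@ler_sum_term _ _ (mem (~: C)) _ v _ _)).
  - exact: mulr_gt0 (mu_gt0 u) uv.
  - by move=> i _; apply: q_ge0.
  - by rewrite !inE.
by move=> i _; apply: mulr_ge0 => //; apply: sumr_ge0.
Qed.

Lemma a_le1 : a <= 1.
Proof.
have [s sS1] := S1_exists.
exact: le_trans (hit_ge sS1 sS1) (prob_hit_eq_le1 _ _ q_ge0 q_sum1 _).
Qed.

Let beta_quarter : 4 * beta < 1 := lt_exp2V_mul4_lt1 card_ge2 beta_gt0 beta_lt.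

Lemma close_flow_term_err x y :
  `|mu x * qh x y - mu x * q x y| <= beta * (mu x * q x y) + eps * Z.
Proof.
have [close_q close_qh] := qh_close x y.
have eZ_gt0 : 0 < eps * Z by rewrite mulr_gt0 // zeta1_gt0.
have mu_x := mu_gt0 x; have b0 := beta_gt0.
have rel_err : 0 < q x y -> `|1 - qh x y / q x y| <= beta ->
    `|mu x * qh x y - mu x * q x y| <= beta * (mu x * q x y).
  move=> q_gt0 err.
  have -> : mu x * qh x y - mu x * q x y = - (mu x * q x y * (1 - qh x y / q x y)).
    by field; rewrite gt_eqF.
  rewrite normrN normrM ger0_norm; last by rewrite mulr_ge0 // ltW.
  by rewrite mulrC ler_wpM2r // mulr_ge0 // ltW.
case: (leP (eps * Z) (mu x * q x y)) => [big_q|small_q].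
  have q_gt0 : 0 < q x y by rewrite -(pmulr_rgt0 _ mu_x) (lt_le_trans eZ_gt0).
  by apply: le_trans (rel_err q_gt0 (close_q big_q)) _; rewrite lerDl ltW.
case: (leP (eps * Z) (mu x * qh x y)) => [big_qh|small_qh].
  have [q_gt0 err] := close_qh big_qh.
  by apply: le_trans (rel_err q_gt0 err) _; rewrite lerDl ltW.
have : 0 <= mu x * q x y by rewrite mulr_ge0 // ltW.
have : 0 <= mu x * qh x y by rewrite mulr_ge0 // ltW.
have : 0 <= beta * (mu x * q x y) by rewrite mulr_ge0 // ?mulr_ge0 // ltW.
rewrite ler_norml; lra.
Qed.

Lemma close_flow_err (A B : {set S}) :
  `|flow qh mu A B - flow q mu A B| <= beta * flow q mu A B + (n * n)%:R * eps * Z.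
Proof.
apply: (@le_trans _ _ (\sum_(x in A) \sum_(y in B) (beta * (mu x * q x y) + eps * Z))).
  rewrite /flow -sumrB; apply: le_trans (ler_norm_sum _ _ _) _.
  apply: ler_sum => x _; rewrite -sumrB; apply: le_trans (ler_norm_sum _ _ _) _.
  by apply: ler_sum => y _; apply: close_flow_term_err.
under eq_bigr do rewrite big_split /= sumr_const.
rewrite big_split /= sumr_const.
under eq_bigr do rewrite -mulr_sumr.
rewrite -mulr_sumr lerD2l -mulrnA -[leLHS]mulr_natl -mulrA.
rewrite ler_wpM2r ?ler_nat ?mulr_ge0 ?(ltW eps_gt0) ?(ltW zeta1_gt0) //.
by rewrite mulnC leq_mul // max_card.
Qed.

Lemma close_flow_bounds (A B : {set S}) : a * Z <= flow q mu A B ->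
  (1 - delta) * flow q mu A B <= flow qh mu A B <= (1 + delta) * flow q mu A B.
Proof.
move=> flow_ge; have := close_flow_err A B.
have eps_small := eps_negligible (Lconst_gt0 card_ge2) card_ge2 a_gt0 a_le1 beta_gt0
  beta_quarter eps_gt0 eps_lt.
have Z_gt0 := zeta1_gt0; have b0 := beta_gt0.
have : (n * n)%:R * eps * Z <= a * beta / 4 * Z by apply: ler_wpM2r eps_small; lra.
have : a * beta / 4 * Z <= beta / 4 * flow q mu A B.
  rewrite (_ : a * beta / 4 * Z = beta / 4 * (a * Z)); last by ring.
  by apply: ler_wpM2l flow_ge; lra.
by rewrite ler_norml => ? ? /andP[? ?]; apply/andP; split; lra.
Qed.

Lemma flow_into_S1_ge (C : {set S}) s0 t :
  C \subset S1 -> s0 \in C -> t \in S1 -> t \notin C -> a * Z <= flow q mu C (S1 :\: C).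
Proof.
move=> CS1 s0C tS1 tC.
pose h := prob_hit_eq q (~: S1 :|: [set t]) t.
have tA : t \in ~: S1 :|: [set t] by rewrite !inE eqxx orbT.
have CS1' : C \proper S1 by apply/properP; split => //; exists t.
have C_gt0 : (0 < #|C|)%N by apply/card_gt0P; exists s0.
(* [h] is 1 at [t], 0 elsewhere off [S1], and harmonic on [S1 :\: [set t]]. *)
have h_defect x : x \in C ->
    h x - \sum_(y in C) q x y * h y <= \sum_(y in S1 :\: C) q x y.
  move=> xC; rewrite lerBlDr /h (prob_hit_eq_harmonic q_ge0 q_sum1 x tA) -/h.
  rewrite [X in _ <= X + _]big_mkcond [X in _ <= _ + X]big_mkcond -big_split /=.
  apply: ler_sum => y _; case: (eqVneq y t) => [->|ynt].
    by rewrite !inE tS1 (negbTE tC) /= mulr1 addr0.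
  have [yS1|yS1] := boolP (y \in S1); last first.
    have yC : y \notin C by apply: contra yS1; apply: (fintype.subsetP CS1).
    by rewrite !inE (negbTE yS1) (negbTE yC) /= mulr0 addr0.
  rewrite !inE yS1 (negbTE ynt) /=.
  have [yC|yC] := boolP (y \in C); first by rewrite add0r.
  by rewrite addr0 ler_piMr ?q_ge0 // prob_hit_eq_le1.
have flow_h : a * flow q mu (~: C) C <= \sum_(y in C) h y * \sum_(x in ~: C) mu x * q x y.
  rewrite /flow exchange_big mulr_sumr; apply: ler_sum => y yC.
  apply: ler_wpM2r; first by apply: sumr_ge0 => x _; rewrite mulr_ge0.
  exact: hit_ge (fintype.subsetP CS1 y yC) tS1.
apply: le_trans (ler_wpM2l (ltW a_gt0) (zeta1_le_flow C_gt0 CS1')) _.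
rewrite -(flow_balance q_sum1 mu_balance); apply: le_trans flow_h _.
rewrite -(stationary_sum_defect mu_balance) /flow; apply: ler_sum => x xC.
by rewrite -mulr_sumr ler_wpM2l // h_defect.
Qed.

Lemma flow_split_S1_ge (D : {set S}) s s' :
  s \in D -> s \in S1 -> s' \in S1 -> s' \notin D -> a * Z <= flow q mu D (~: D).
Proof.
move=> sD sS1 s'S1 s'D.
have sDS1 : s \in D :&: S1 by rewrite inE sD.
have s'DS1 : s' \notin D :&: S1 by rewrite inE negb_and s'D.
apply: le_trans (flow_into_S1_ge (subsetIr D S1) sDS1 s'S1 s'DS1) _.
apply: (flow_subset q_ge0 mu_ge0 (subsetIl D S1)).
by apply/fintype.subsetP => y; rewrite !inE; case: (y \in D); case: (y \in S1).
Qed.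

Lemma S1_connect s t : s \in S1 -> t \in S1 -> connect (qrel qh) s t.
Proof.
move=> sS1 tS1; apply/idPn => nst.
pose C := [set x in S1 | connect (qrel qh) s x].
have CS1 : C \subset S1 by apply/fintype.subsetP => x; rewrite inE => /andP[].
have sC : s \in C by rewrite inE sS1 connect0.
have tC : t \notin C by rewrite inE tS1 /= (negbTE nst).
have flow_ge := flow_into_S1_ge CS1 sC tS1 tC.
have no_exit : flow qh mu C (S1 :\: C) = 0.
  apply: big1 => x; rewrite inE => /andP[_ sx]; apply: big1 => y.
  rewrite !inE => /andP[yC yS1].
  have := qh_ge0 x y; rewrite le_eqVlt => /predU1P[<-|qh_gt0]; first by rewrite mulr0.
  by move: yC; rewrite yS1 (connect_trans sx (connect1 qh_gt0)).
have /andP[flow_qh_ge _] := close_flow_bounds flow_ge.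
have aZ_gt0 : 0 < a * Z by rewrite mulr_gt0 // zeta1_gt0.
have b0 := beta_gt0; have b4 := beta_quarter.
have : 0 < (1 - delta) * flow q mu C (S1 :\: C) by apply: mulr_gt0; lra.
by rewrite no_exit in flow_qh_ge; lra.
Qed.

Lemma connect_to_S1 y : exists2 z, z \in S1 & connect (qrel qh) y z.
Proof.
have [s0 s0S1] := S1_exists.
move: (q_irr y s0) => /connectP[pth]; elim: pth y => [|z pth IH] y /=.
  by move=> _ <-; exists s0; last exact: connect0.
move=> /andP[yz pz] ez; have [yS1|yS1] := boolP (y \in S1).
  by exists y; last exact: connect0.
have [z' z'S1 zz'] := IH z pz ez; exists z' => //.
by apply: connect_trans zz'; apply: connect1; rewrite /qrel qh_out.
Qed.

Lemma recurrent_class_S1 s0 : s0 \in S1 ->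
  recurrent_class qh [set y | connect (qrel qh) s0 y].
Proof.
move=> s0S1; split; first by apply/card_gt0P; exists s0; rewrite inE connect0.
move=> x; rewrite inE => s0x y; rewrite inE; apply/idP/idP; first exact: connect_trans.
have [z zS1 xz] := connect_to_S1 x.
by move=> s0y; apply: connect_trans xz (connect_trans (S1_connect zS1 s0S1) s0y).
Qed.

Lemma stationary_gt0_S1 (muh : S -> R) : mc_stationary qh muh ->
  forall s, s \in S1 -> 0 < muh s.
Proof.
move=> [muh_ge0 [muh_sum1 muh_balance]] s sS1.
have [x muh_x] := sumr_eq1_exists_gt0 muh_sum1.
have [z zS1 xz] := connect_to_S1 x.
exact: (stationary_connect_gt0 qh_ge0 muh_balance muh_ge0 muh_x
  (connect_trans xz (S1_connect zS1 sS1))).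
Qed.

Section StationaryRatio.
Variable muh : S -> R.
Hypothesis muh_stat : mc_stationary qh muh.

Let muh_balance : forall t, \sum_s muh s * qh s t = muh t.
Proof. by case: muh_stat => _ []. Qed.

Local Notation r x := (muh x / mu x).

Lemma ratio_level_gap lam s s' : 0 < lam -> s \in S1 -> s' \in S1 ->
  rho * lam < r s -> r s' <= rho * lam -> exists x, lam < r x <= rho * lam.
Proof.
move=> lam_gt0 sS1 s'S1 rs rs'.
case: (boolP [exists x, lam < r x <= rho * lam]) => [/existsP//|].
rewrite negb_exists => /forallP no_gap; exfalso.
pose D := [set x | rho * lam < r x].
have sD : s \in D by rewrite inE.
have s'D : s' \notin D by rewrite inE -leNgt.
have flow_out := flow_split_S1_ge sD sS1 s'S1 s'D.
have flow_in : a * Z <= flow q mu (~: D) D by rewrite (flow_balance q_sum1 mu_balance).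
have /andP[out_lo _] := close_flow_bounds flow_out.
have /andP[_ in_hi] := close_flow_bounds flow_in.
rewrite (flow_balance q_sum1 mu_balance) in in_hi.
have out_ge : rho * lam * flow qh mu D (~: D) <= flow qh muh D (~: D).
  apply: ler_flow_scale => // x; rewrite inE => /ltW.
  by rewrite ler_pdivlMr ?mu_gt0.
have in_le : flow qh muh (~: D) D <= lam * flow qh mu (~: D) D.
  apply: flow_ler_scale => // x; rewrite !inE -leNgt => rx.
  by move: (no_gap x); rewrite rx andbT -leNgt ler_pdivrMr ?mu_gt0.
rewrite (flow_balance qh_sum1 muh_balance) in in_le.
have rho_out_le : rho * flow qh mu D (~: D) <= flow qh mu (~: D) D.
  by rewrite -(ler_pM2l lam_gt0) mulrA [lam * rho]mulrC (le_trans out_ge in_le).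
have F_gt0 : 0 < flow q mu D (~: D).
  by apply: lt_le_trans flow_out; rewrite mulr_gt0 ?zeta1_gt0.
have b0 := beta_gt0; have b4 := beta_quarter.
have : 0 < rho * (1 - delta) - (1 + delta) by nra.
nra.
Qed.

Lemma ratio_le_spread s s' : s \in S1 -> s' \in S1 -> r s <= rho ^+ n * r s'.
Proof.
move=> sS1 s'S1; rewrite leNgt; apply/negP => spread.
have b0 := beta_gt0.
have r_gt0 : 0 < r s' by rewrite divr_gt0 ?mu_gt0 // (stationary_gt0_S1 muh_stat).
pose D k := [set x | rho ^+ k * r s' < r x].
have D_shrinks k : (k < n)%N -> (#|D k.+1| < #|D k|)%N.
  move=> k_lt; apply: proper_card; apply/properP; split.
    apply/fintype.subsetP => x; rewrite !inE; apply: le_lt_trans.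
    by rewrite ler_pM2r // ler_eXn2l //; lra.
  have lam_gt0 : 0 < rho ^+ k * r s' by rewrite mulr_gt0 // exprn_gt0 //; lra.
  have [||x /andP[x_gt x_le]] := ratio_level_gap lam_gt0 sS1 s'S1.
  - apply: le_lt_trans spread; rewrite mulrA -exprS ler_pM2r // ler_eXn2l //; lra.
  - rewrite mulrA -exprS -[leLHS]mul1r ler_pM2r // exprn_ege1 //; lra.
  by exists x; rewrite !inE // -leNgt exprS -mulrA.
have D_card k : (k <= n)%N -> (#|D k| + k <= #|D 0|)%N.
  elim: k => [|k IH] k_le; first by rewrite addn0.
  by have := D_shrinks k k_le; have := IH (ltnW k_le); lia.
have Dn_gt0 : (0 < #|D n|)%N by apply/card_gt0P; exists s; rewrite inE.
have D0_lt : (#|D 0| < n)%N.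
  rewrite -cardsT; apply: proper_card; apply/properP; split; first exact: finset.subsetT.
  by exists s'; rewrite !inE // expr0 mul1r ltxx.
by have := D_card n (leqnn n); lia.
Qed.

Lemma conditional_ratio_bound s : s \in S1 ->
  `|1 - (muh s / \sum_(x in S1) muh x) / (mu s / \sum_(x in S1) mu x)|
     <= 18 * beta * (Lconst S)%:R.
Proof.
move=> sS1; have b0 := beta_gt0; have b4 := beta_quarter.
set P := rho ^+ n.
have P_ge1 : 1 <= P by rewrite exprn_ege1 //; lra.
have P_le : P - 1 <= 18 * beta * (Lconst S)%:R.
  have : P + 3 * delta <= 1 + 3 * delta * (2 ^ n)%:R by apply: expr1D_le; lra.
  have : (2 ^ n)%:R <= 4 * (Lconst S)%:R :> R.
    by rewrite -natrM ler_nat Lconst_ge_exp2 // card_ge2.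
  have : 1 <= (Lconst S)%:R :> R by rewrite ler1n Lconst_gt0 // card_ge2.
  nra.
have mu_s := mu_gt0 s; have muh_s := stationary_gt0_S1 muh_stat sS1.
have r_gt0 : 0 < r s by rewrite divr_gt0.
set Sh := \sum_(x in S1) muh x; set Sm := \sum_(x in S1) mu x.
have Sm_gt0 : 0 < Sm.
  by apply: lt_le_trans mu_s (ler_sum_term _ sS1) => x _; rewrite ltW ?mu_gt0.
have Sh_gt0 : 0 < Sh.
  apply: lt_le_trans muh_s (ler_sum_term _ sS1) => x xS1.
  by rewrite ltW ?(stationary_gt0_S1 muh_stat).
have Sh_le : Sh <= P * r s * Sm.
  rewrite /Sh /Sm mulr_sumr; apply: ler_sum => x xS1.
  rewrite -[leLHS](divfK (lt0r_neq0 (mu_gt0 x))).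
  by apply: ler_wpM2r; [exact: ltW (mu_gt0 x) | exact: ratio_le_spread].
have Sh_ge : r s * Sm <= P * Sh.
  rewrite /Sh /Sm !mulr_sumr; apply: ler_sum => x xS1.
  rewrite -[muh x](divfK (lt0r_neq0 (mu_gt0 x))) mulrA.
  by apply: ler_wpM2r; [exact: ltW (mu_gt0 x) | exact: ratio_le_spread].
have -> : (muh s / Sh) / (mu s / Sm) = r s * Sm / Sh by field; rewrite !gt_eqF.
set X := r s * Sm / Sh.
have X_le : X <= P by rewrite /X ler_pdivrMr // mulrC.
have X_ge : 1 <= P * X by rewrite /X mulrA ler_pdivlMr // mul1r mulrA.
have X_gt0 : 0 < X by apply: divr_gt0 => //; apply: mulr_gt0.
apply: le_trans P_le; rewrite ler_norml; apply/andP; split; first lra.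
nra.
Qed.

End StationaryRatio.
End Perturbation.


Unset Implicit Arguments.

Theorem theorem2 (R : realType) (S : finType) (S1 : {set S})
  (beta a eps : R) (q qh : S -> S -> R) (mu : S -> R) :
  (1 < #|S1|)%N ->
  0 < beta -> beta < ((2 ^ #|S|)%:R)^-1 ->
  0 < a ->
  0 < eps ->
  eps < 2^-1 * (a / (Lconst S)%:R) ^+ #|S| * (beta * (1 - beta))
          / ((Lconst S)%:R * (#|S| ^ 4)%:R) ->
  transition_matrix q -> mc_irreducible q -> mc_stationary q mu ->
  (forall s t, s \in S1 -> t \in S1 ->
     a <= prob_hit_eq q (~: S1 :|: [set t]) t s) ->
  transition_matrix qh ->
  mc_close eps beta q qh mu S1 ->
  (forall s t, s \notin S1 -> qh s t = q s t) ->
  exists R0 : {set S},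
    [/\ recurrent_class qh R0,
        S1 \subset R0 &
        forall muh : S -> R,
          mc_stationary qh muh -> (forall s, s \notin R0 -> muh s = 0) ->
          forall s, s \in S1 ->
            `|1 - (muh s / \sum_(x in S1) muh x) / (mu s / \sum_(x in S1) mu x)|
              <= 18 * beta * (Lconst S)%:R].
Proof.
move=> S1_gt1 beta_gt0 beta_lt a_gt0 eps_gt0 eps_lt q_tm q_irr mu_stat hit_ge
  qh_tm qh_close qh_out.
have [s0 s0S1] := S1_exists S1_gt1.
exists [set y | connect (qrel qh) s0 y]; split.
- exact: (recurrent_class_S1 S1_gt1 beta_gt0 beta_lt a_gt0 eps_gt0 eps_lt q_tm q_irr
    mu_stat hit_ge qh_tm qh_close qh_out s0S1).
- apply/fintype.subsetP => s sS1; rewrite inE.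
  exact: (S1_connect S1_gt1 beta_gt0 beta_lt a_gt0 eps_gt0 eps_lt q_tm q_irr
    mu_stat hit_ge qh_tm qh_close s0S1 sS1).
(* The support condition is automatic: the class of [S1] is the only recurrent class. *)
- move=> muh muh_stat _ s sS1.
  exact: (conditional_ratio_bound S1_gt1 beta_gt0 beta_lt a_gt0 eps_gt0 eps_lt q_tm
    q_irr mu_stat hit_ge qh_tm qh_close qh_out muh_stat sS1).
Qed.
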